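(* Fix $\nu>0$ and $\mu_k\in\mathbb{R}$, and consider the sub-problem of minimizing $\mathcal L_{\nu,\mu_k}(x)=f(x)+\mu_kh(x)+\frac{1}{2\nu}h(x)^2$ over $x\in\mathbb{R}^n$. Let $\bar x$ be a stationary point of $\mathcal L_{\nu,\mu_k}$, and set $\bar\tau=h(\bar x)/\nu$, $\bar\sigma_f=\nabla V_f(\Lambda_f(\bar x))$, $\bar\sigma_h=\nabla V_h(\Lambda_h(\bar x))$. If $G(\bar\tau,\bar\sigma_f,\bar\sigma_h)$ is nonsingular, then $(\bar\tau,\bar\sigma_f,\bar\sigma_h)$ is a stationary point of $P^d_{\nu,\mu_k}$ and $$\mathcal L_{\nu,\mu_k}(\bar x)=P^d_{\nu,\mu_k}(\bar\tau,\bar\sigma_f,\bar\sigma_h).$$ Furthermore, if $V_f$ and $V_h$ are convex, $\mu_k+\bar\tau>0$ and $G(\bar\tau,\bar\sigma_f,\bar\sigma_h)\succ0$, then $\bar x$ is a global minimizer of $\mathcal L_{\nu,\mu_k}$ on $\mathbb{R}^n$.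
   Context: Setting: $f(x)=V_f(\Lambda_f(x))+\tfrac12x^TAx-c^Tx$ ($A$ symmetric, $c\in\mathbb{R}^n$) and a single constraint function $h(x)=V_h(\Lambda_h(x))\in\mathbb{R}$, where $\Lambda_f:\mathbb{R}^n\to\mathbb{R}^{k_f}$, $\Lambda_h:\mathbb{R}^n\to\mathbb{R}^{l}$ are quadratic maps (components polynomials of degree at most 2), and $V_f,V_h$ are ''canonical functions'': each $V$ is differentiable on an open set $E$ containing the image of its $\Lambda$, $\nabla V:E\to E^*$ is a bijection onto an open set $E^*$, and the Legendre conjugate $V^*(\sigma)=\sigma^T\xi-V(\xi)$, $\xi=(\nabla V)^{-1}(\sigma)$, is differentiable on $E^*$ with $\nabla V^*=(\nabla V)^{-1}$. For fixed $\nu>0,\mu_k$, define for $\tau\in\mathbb{R}$, $\sigma_f\in E_f^*$, $\sigma_h\in E_h^*$: $$\Xi_1^{\nu,\mu_k}(x,\tau,\sigma_f,\sigma_h)=\Lambda_f(x)^T\sigma_f-V_f^*(\sigma_f)+(\mu_k+\tau)\big[\Lambda_h(x)^T\sigma_h-V_h^*(\sigma_h)\big]-\tfrac{\nu}{2}\tau^2+\tfrac12x^TAx-c^Tx,$$ which is quadratic in $x$ with $x$-independent Hessian $G(\tau,\sigma_f,\sigma_h)=\nabla_x^2\Xi_1^{\nu,\mu_k}$. The dual function $P^d_{\nu,\mu_k}(\tau,\sigma_f,\sigma_h)$ is defined, on the open set where $G(\tau,\sigma_f,\sigma_h)$ is nonsingular, as the value of $\Xi_1^{\nu,\mu_k}(\cdot,\tau,\sigma_f,\sigma_h)$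 at its unique stationary point in $x$; equivalently $P^d_{\nu,\mu_k}=U^\Lambda(\mu_k+\tau,\sigma_f,\sigma_h)-V_f^*(\sigma_f)-(\mu_k+\tau)V_h^*(\sigma_h)-\frac{\nu}{2}\tau^2$, where $U^\Lambda(\mu,\sigma_f,\sigma_h)$ is the stationary value in $x$ of $\Lambda_f(x)^T\sigma_f+\mu\Lambda_h(x)^T\sigma_h+\tfrac12x^TAx-c^Tx$. *)

From Stdlib Require Import Reals ClassicalEpsilon.
From mathcomp Require Import all_boot.
Set Implicit Arguments. Unset Strict Implicit.
Open Scope R_scope.

Definition vec (n : nat) := 'I_n -> R.
Definition mat (n : nat) := 'I_n -> 'I_n -> R.

Definition sumR (n : nat) (F : 'I_n -> R) : R := \big[Rplus/0]_(i < n) F i.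
Definition dot (n : nat) (u v : vec n) : R := sumR (fun i => u i * v i).
Definition vsub (n : nat) (u v : vec n) : vec n := fun i => u i - v i.
Definition vnorm (n : nat) (u : vec n) : R := sqrt (dot u u).
Definition bilin (n : nat) (M : mat n) (x y : vec n) : R :=
  sumR (fun i => sumR (fun j => x i * M i j * y j)).
Definition matvec (n : nat) (M : mat n) (x : vec n) : vec n :=
  fun i => sumR (fun j => M i j * x j).

Definition has_grad (k : nat) (F : vec k -> R) (x g : vec k) : Prop :=
  forall eps, 0 < eps -> exists delta, 0 < delta /\
    forall y, vnorm (vsub y x) < delta ->
      Rabs (F y - F x - dot g (vsub y x)) <= eps * vnorm (vsub y x).

Definition is_open (k : nat) (E : vec k -> Prop) : Prop :=
  forall x, E x -> exists r, 0 < r /\ forall y, vnorm (vsub y x) < r -> E y.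

(* A "canonical function" V on E with gradient map gV : E -> Estar a bijection
   whose inverse is gVinv; its Legendre conjugate (see Vstar below) is
   differentiable on Estar with gradient gVinv. *)
Definition Vstar (k : nat) (V : vec k -> R) (gVinv : vec k -> vec k)
  (s : vec k) : R := dot s (gVinv s) - V (gVinv s).

Record canonical_fun (k : nat) (V : vec k -> R) (E Estar : vec k -> Prop)
    (gV gVinv : vec k -> vec k) : Prop := {
  cf_E_open : is_open E;
  cf_Estar_open : is_open Estar;
  cf_diff : forall xi, E xi -> has_grad V xi (gV xi);
  cf_maps : forall xi, E xi -> Estar (gV xi);
  cf_inv_l : forall xi, E xi -> gVinv (gV xi) = xi;
  cf_inv_mem : forall s, Estar s -> E (gVinv s);
  cf_inv_r : forall s, Estar s -> gV (gVinv s) = s;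
  cf_conj_diff : forall s, Estar s -> has_grad (Vstar V gVinv) s (gVinv s)
}.

Definition vcomb (k : nat) (t : R) (x y : vec k) : vec k :=
  fun i => t * x i + (1 - t) * y i.
Definition convex_on (k : nat) (E : vec k -> Prop) (V : vec k -> R) : Prop :=
  (forall x y t, E x -> E y -> 0 <= t <= 1 -> E (vcomb t x y)) /\
  (forall x y t, E x -> E y -> 0 <= t <= 1 ->
     V (vcomb t x y) <= t * V x + (1 - t) * V y).

Record qmap (n k : nat) := QMap {
  qQ : 'I_k -> mat n;
  qb : 'I_k -> vec n;
  qc : 'I_k -> R
}.
Definition qeval (n k : nat) (L : qmap n k) (x : vec n) : vec k :=
  fun j => bilin (qQ L j) x x + dot (qb L j) x + qc L j.
(* Hessian of the scalar map x |-> Lambda(x)^T sigma : sum_j sigma_j (Q_j + Q_j^T) *)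
Definition qhess (n k : nat) (L : qmap n k) (s : vec k) : mat n :=
  fun i i' => sumR (fun j => s j * (qQ L j i i' + qQ L j i' i)).

Definition msymmetric (n : nat) (M : mat n) : Prop := forall i j, M i j = M j i.
Definition nonsingular (n : nat) (M : mat n) : Prop :=
  forall d : vec n, (forall i, matvec M d i = 0) -> forall i, d i = 0.
Definition posdef (n : nat) (M : mat n) : Prop :=
  forall d : vec n, (exists i, d i <> 0) -> 0 < bilin M d d.

Section Problem.
Variables (n kf l : nat) (A : mat n) (c : vec n)
  (Lf : qmap n kf) (Vf : vec kf -> R) (gVfinv : vec kf -> vec kf)
  (Lh : qmap n l) (Vh : vec l -> R) (gVhinv : vec l -> vec l)
  (nu mu : R).

Definition fobj (x : vec n) : R :=
  Vf (qeval Lf x) + / 2 * bilin A x x - dot c x.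
Definition hcon (x : vec n) : R := Vh (qeval Lh x).

Definition Laug (x : vec n) : R :=
  fobj x + mu * hcon x + / (2 * nu) * (hcon x) ^ 2.

Definition Xi1 (x : vec n) (t : R) (sf : vec kf) (sh : vec l) : R :=
  dot (qeval Lf x) sf - Vstar Vf gVfinv sf
  + (mu + t) * (dot (qeval Lh x) sh - Vstar Vh gVhinv sh)
  - nu / 2 * t ^ 2 + / 2 * bilin A x x - dot c x.

(* G(tau, sigma_f, sigma_h) = Hessian in x of Xi1 (x-independent) *)
Definition Gmat (t : R) (sf : vec kf) (sh : vec l) : mat n :=
  fun i i' => A i i' + qhess Lf sf i i' + (mu + t) * qhess Lh sh i i'.

Definition x_stationary (F : vec n -> R) (x : vec n) : Prop :=
  has_grad F x (fun _ => 0).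

(* dual function: value of Xi1 at its (unique, when G is nonsingular)
   stationary point in x *)
Definition Pd (t : R) (sf : vec kf) (sh : vec l) : R :=
  Xi1 (epsilon (inhabits (fun _ : 'I_n => 0))
         (fun x => x_stationary (fun y => Xi1 y t sf sh) x)) t sf sh.
End Problem.

Definition dist3 (kf l : nat) (t t' : R) (sf sf' : vec kf) (sh sh' : vec l) : R :=
  sqrt ((t' - t) ^ 2 + dot (vsub sf' sf) (vsub sf' sf) + dot (vsub sh' sh) (vsub sh' sh)).
Definition stationary3 (kf l : nat) (P : R -> vec kf -> vec l -> R)
  (t : R) (sf : vec kf) (sh : vec l) : Prop :=
  forall eps, 0 < eps -> exists delta, 0 < delta /\
    forall t' sf' sh', dist3 t t' sf sf' sh sh' < delta ->
      Rabs (P t' sf' sh' - P t sf sh) <= eps * dist3 t t' sf sf' sh sh'.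

(* Write p = (tau, sigma_f, sigma_h) for dual points, p0 for the one built
   from xbar, and Xi(x, p) for the total complementary function: a quadratic
   function of x whose symmetrised quadratic part is G(p).
   For the problem itself the key identity is the gap
     L(y) - Xi(y, p0) = B_f(y) + (mu + tau) B_h(y) + (h(y) - h(xbar))^2 / (2 nu),
   with B_f, B_h Bregman remainders of V_f, V_h: it gives L(xbar) = Xi(xbar, p0),
   stationarity of xbar for Xi(., p0), and L >= Xi(., p0) in the convex case.
   Stationarity of P^d then follows from the general fact, and global
   optimality from L(y) >= Xi(y, p0) >= Xi(xbar, p0) = L(xbar). *)

From Stdlib Require Import Reals ClassicalEpsilon Classical FunctionalExtensionality Lra.
From HB Require Import structures.
From mathcomp Require Import all_boot all_algebra.
From mathcomp Require Import Rstruct.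
Set Implicit Arguments. Unset Strict Implicit.
Open Scope R_scope.

Lemma Rplus_assoc' : associative Rplus.
Proof. by move=> a b c; rewrite Rplus_assoc. Qed.
Lemma Rplus_comm' : commutative Rplus.
Proof. exact: Rplus_comm. Qed.
Lemma Rplus_0_l' : left_id 0 Rplus.
Proof. exact: Rplus_0_l. Qed.
HB.instance Definition _ :=
  Monoid.isComLaw.Build R 0 Rplus Rplus_assoc' Rplus_comm' Rplus_0_l'.

Section FiniteSums.
Variable n : nat.
Implicit Types F G : 'I_n -> R.

Lemma sumR_ext F G : (forall i, F i = G i) -> sumR F = sumR G.
Proof. by move=> FG; apply: eq_bigr => i _. Qed.

Lemma sumR_add F G : sumR (fun i => F i + G i) = sumR F + sumR G.
Proof. exact: big_split. Qed.

Lemma sumR_scal c F : sumR (fun i => c * F i) = c * sumR F.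
Proof.
apply: (big_rec2 (fun x y => y = c * x)); first by ring.
by move=> i x y _ ->; ring.
Qed.

Lemma sumR_scalr c F : sumR (fun i => F i * c) = sumR F * c.
Proof. by rewrite Rmult_comm -sumR_scal; apply: sumR_ext => i; ring. Qed.

Lemma sumR_sub F G : sumR (fun i => F i - G i) = sumR F - sumR G.
Proof.
rewrite (sumR_ext (G := fun i => F i + (-1) * G i)); last by move=> i; ring.
by rewrite sumR_add sumR_scal; ring.
Qed.

Lemma sumR_0 : sumR (fun _ : 'I_n => 0) = 0.
Proof. exact: big1. Qed.

Lemma sumR_le F G : (forall i, F i <= G i) -> sumR F <= sumR G.
Proof.
move=> FG; apply: (big_rec2 (fun x y => x <= y)); first lra.
by move=> i x y _ Hxy; have := FG i; lra.
Qed.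

Lemma sumR_ge0 F : (forall i, 0 <= F i) -> 0 <= sumR F.
Proof. by move=> F0; rewrite -sumR_0; apply: sumR_le. Qed.

Lemma sumR_abs F : Rabs (sumR F) <= sumR (fun i => Rabs (F i)).
Proof.
apply: (big_rec2 (fun x y => Rabs x <= y)); first by rewrite Rabs_R0; lra.
by move=> i x y _ Hxy; have := Rabs_triang (F i) x; lra.
Qed.

Lemma sumR_term F (i : 'I_n) : (forall j, 0 <= F j) -> F i <= sumR F.
Proof.
move=> F0; rewrite /sumR (bigD1 i) //= -{1}(Rplus_0_r (F i)).
apply: Rplus_le_compat_l.
by apply: (big_rec (fun x => 0 <= x)) => [|j x _ Hx]; [lra | have := F0 j; lra].
Qed.

Lemma sumR_delta (i : 'I_n) (a : R) : sumR (fun j => if j == i then a else 0) = a.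
Proof.
rewrite /sumR (bigD1 i) //= eqxx big1; first lra.
by move=> j /negbTE ->.
Qed.

End FiniteSums.

Lemma sumR_swap n m (F : 'I_n -> 'I_m -> R) :
  sumR (fun i => sumR (fun j => F i j)) = sumR (fun j => sumR (fun i => F i j)).
Proof. exact: exchange_big. Qed.

Lemma fin_bound (T : finType) (f : T -> R) :
  exists b, 0 <= b /\ forall x, Rabs (f x) <= b.
Proof.
exists (\big[Rplus/0]_(x : T) Rabs (f x)); split.
  by apply: (big_rec (fun x => 0 <= x)) => [|j x _ Hx]; [lra | have := Rabs_pos (f j); lra].
move=> x; rewrite (bigD1 x) //= -{1}(Rplus_0_r (Rabs (f x))).
apply: Rplus_le_compat_l.
by apply: (big_rec (fun x => 0 <= x)) => [|j y _ Hy]; [lra | have := Rabs_pos (f j); lra].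
Qed.

Definition N1 n (u : vec n) : R := sumR (fun i => Rabs (u i)).
Definition nR n : R := sumR (fun _ : 'I_n => 1).

Section Norms.
Variable n : nat.
Implicit Types u v x y : vec n.

Lemma N1_ge0 u : 0 <= N1 u.
Proof. by apply: sumR_ge0 => i; apply: Rabs_pos. Qed.

Lemma nR_ge0 : 0 <= nR n.
Proof. by apply: sumR_ge0 => i; lra. Qed.

Lemma dot_ge0 u : 0 <= dot u u.
Proof. by apply: sumR_ge0 => i; nra. Qed.

Lemma vnorm_ge0 u : 0 <= vnorm u.
Proof. exact: sqrt_pos. Qed.

Lemma comp_le_vnorm u i : Rabs (u i) <= vnorm u.
Proof.
rewrite /vnorm -sqrt_Rsqr_abs; apply: sqrt_le_1_alt; rewrite /Rsqr.
by apply: (sumR_term (F := fun i => u i * u i)) => j; nra.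
Qed.

Lemma comp_le_N1 u i : Rabs (u i) <= N1 u.
Proof. by apply: (sumR_term (F := fun i => Rabs (u i))) => j; apply: Rabs_pos. Qed.

Lemma vnorm_le_N1 u : vnorm u <= N1 u.
Proof.
rewrite /vnorm -(sqrt_Rsqr (N1 u)); last exact: N1_ge0.
apply: sqrt_le_1_alt; rewrite /Rsqr.
suff [] : dot u u <= N1 u * N1 u /\ 0 <= N1 u by [].
unfold dot, N1, sumR.
apply: (big_rec2 (fun a b => a <= b * b /\ 0 <= b)); first lra.
move=> i a b _ [Hab Hb]; have := Rabs_pos (u i).
have : u i * u i = Rabs (u i) * Rabs (u i).
  by rewrite -Rabs_mult Rabs_pos_eq //; nra.
split; nra.
Qed.

Lemma N1_le_vnorm u : N1 u <= nR n * vnorm u.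
Proof.
rewrite /nR -sumR_scalr; apply: sumR_le => i.
by rewrite Rmult_1_l; apply: comp_le_vnorm.
Qed.

Lemma N1_const_bound u c : (forall i, Rabs (u i) <= c) -> N1 u <= nR n * c.
Proof.
by move=> Hu; rewrite /nR -sumR_scalr; apply: sumR_le => i; rewrite Rmult_1_l.
Qed.

Lemma N1_le0_eq0 u : N1 u <= 0 -> forall i, u i = 0.
Proof.
move=> Hu i; have := comp_le_N1 u i; have := Rabs_pos (u i).
by case: (Req_dec (u i) 0) => // /Rabs_pos_lt; lra.
Qed.

Lemma dot_bound u v : Rabs (dot u v) <= N1 u * N1 v.
Proof.
apply: Rle_trans (sumR_abs _) _; rewrite /N1 -sumR_scalr.
apply: sumR_le => i; rewrite Rabs_mult.
by apply: Rmult_le_compat_l; [apply: Rabs_pos | apply: comp_le_N1].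
Qed.

Lemma dot_bound_sup u v b : (forall i, Rabs (v i) <= b) -> Rabs (dot u v) <= b * N1 u.
Proof.
move=> Hv; apply: Rle_trans (sumR_abs _) _; rewrite /N1 -sumR_scal.
apply: sumR_le => i; rewrite Rabs_mult Rmult_comm.
by apply: Rmult_le_compat_r; [apply: Rabs_pos | apply: Hv].
Qed.

Lemma vnorm_scal t u : vnorm (fun i => t * u i) = Rabs t * vnorm u.
Proof.
rewrite /vnorm /dot (sumR_ext (G := fun i => (t * t) * (u i * u i))); last by move=> i; ring.
rewrite sumR_scal sqrt_mult; [|nra | exact: dot_ge0].
by rewrite -(sqrt_Rsqr_abs t).
Qed.

Lemma dot_comm u v : dot u v = dot v u.
Proof. by apply: sumR_ext => i; ring. Qed.

Lemma dot_sub_r g u v : dot g (vsub u v) = dot g u - dot g v.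
Proof. by rewrite /dot -sumR_sub; apply: sumR_ext => i; rewrite /vsub; ring. Qed.

Lemma dot_sub_l u v g : dot (vsub u v) g = dot u g - dot v g.
Proof. by rewrite /dot -sumR_sub; apply: sumR_ext => i; rewrite /vsub; ring. Qed.

Lemma dot_zero_l v : dot (fun _ => 0) v = 0.
Proof. by rewrite /dot -[RHS](sumR_0 n); apply: sumR_ext => i; ring. Qed.

End Norms.

Section MatrixBounds.
Variable n : nat.
Implicit Types (M : mat n) (u v x y : vec n).

Lemma mat_bound M : exists b, 0 <= b /\ forall i j, Rabs (M i j) <= b.
Proof.
have [b [Hb HM]] := fin_bound (fun p : 'I_n * 'I_n => M p.1 p.2).
by exists b; split=> // i j; apply: (HM (i, j)).
Qed.

Lemma matvec_N1 M b v : (forall i j, Rabs (M i j) <= b) ->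
  N1 (matvec M v) <= (nR n * b) * N1 v.
Proof.
move=> HM; rewrite Rmult_assoc; apply: N1_const_bound => i.
by rewrite -[matvec M v i]/(dot (M i) v) dot_comm; apply: dot_bound_sup => j.
Qed.

Lemma bilin_bound M b x y : (forall i j, Rabs (M i j) <= b) ->
  Rabs (bilin M x y) <= b * N1 x * N1 y.
Proof.
move=> HM; rewrite (Rmult_comm b) Rmult_assoc.
apply: Rle_trans (sumR_abs _) _; rewrite [N1 x]/N1 -sumR_scalr.
apply: sumR_le => i.
have -> : sumR (fun j => x i * M i j * y j) = x i * dot y (M i).
  by rewrite -sumR_scal; apply: sumR_ext => j; ring.
rewrite Rabs_mult; apply: Rmult_le_compat_l; first exact: Rabs_pos.
exact: dot_bound_sup.
Qed.

Lemma matvec_sub M u v i : matvec M (vsub u v) i = matvec M u i - matvec M v i.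
Proof. by rewrite /matvec -sumR_sub; apply: sumR_ext => j; rewrite /vsub; ring. Qed.

End MatrixBounds.

Lemma lt_Rmin4 a b c d x :
  x < Rmin (Rmin a b) (Rmin c d) -> x < a /\ x < b /\ x < c /\ x < d.
Proof.
have := Rmin_l (Rmin a b) (Rmin c d); have := Rmin_r (Rmin a b) (Rmin c d).
have := Rmin_l a b; have := Rmin_r a b; have := Rmin_l c d; have := Rmin_r c d.
lra.
Qed.

Lemma Rabs_neg3 a b c : Rabs (- a - b - c) <= Rabs a + Rabs b + Rabs c.
Proof.
have -> : - a - b - c = (- a + - b) + - c by ring.
apply: Rle_trans (Rabs_triang _ _) _; rewrite Rabs_Ropp.
by have := Rabs_triang (- a) (- b); rewrite !Rabs_Ropp; lra.
Qed.

Definition smallat k (F : vec k -> R) (x0 : vec k) : Prop :=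
  forall eps, 0 < eps -> exists delta, 0 < delta /\
    forall y, vnorm (vsub y x0) < delta -> Rabs (F y) <= eps * vnorm (vsub y x0).
Definition lipat k (F : vec k -> R) (x0 : vec k) : Prop :=
  exists C delta, 0 <= C /\ 0 < delta /\
    forall y, vnorm (vsub y x0) < delta -> Rabs (F y) <= C * vnorm (vsub y x0).

Section LittleO.
Variable k : nat.
Implicit Types (F G : vec k -> R) (x : vec k).

Lemma small_ext F G x : (forall y, F y = G y) -> smallat F x -> smallat G x.
Proof.
move=> FG HF eps Heps; have [d [Hd HFd]] := HF eps Heps.
by exists d; split=> // y Hy; rewrite -FG; apply: HFd.
Qed.

Lemma lip_ext F G x : (forall y, F y = G y) -> lipat F x -> lipat G x.
Proof.
move=> FG [C [d [HC [Hd HF]]]].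
exists C, d; do 2!split=> //.
by move=> y Hy; rewrite -FG; apply: HF.
Qed.

Lemma small_add F G x : smallat F x -> smallat G x -> smallat (fun y => F y + G y) x.
Proof.
move=> HF HG eps Heps.
have [d1 [Hd1 K1]] := HF (eps / 2) ltac:(lra).
have [d2 [Hd2 K2]] := HG (eps / 2) ltac:(lra).
exists (Rmin d1 d2); split=> [|y Hy]; first exact: Rmin_pos.
have := Rmin_l d1 d2; have := Rmin_r d1 d2 => H2 H1.
have := K1 y ltac:(lra); have := K2 y ltac:(lra); have := Rabs_triang (F y) (G y).
lra.
Qed.

Lemma small_scal c F x : smallat F x -> smallat (fun y => c * F y) x.
Proof.
move=> HF eps Heps; have Hc := Rabs_pos c.
have [d [Hd K]] := HF (eps / (Rabs c + 1)) ltac:(apply: Rdiv_lt_0_compat; lra).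
exists d; split=> // y Hy; have {}K := K y Hy; rewrite Rabs_mult.
have := vnorm_ge0 (vsub y x); have := Rabs_pos (F y).
have : eps / (Rabs c + 1) * (Rabs c + 1) = eps by field; lra.
have : 0 < eps / (Rabs c + 1) by apply: Rdiv_lt_0_compat; lra.
nra.
Qed.

Lemma small_lip F x : smallat F x -> lipat F x.
Proof.
move=> HF; have [d [Hd K]] := HF 1 Rlt_0_1.
by exists 1, d; repeat split => //; lra.
Qed.

Lemma lip_add F G x : lipat F x -> lipat G x -> lipat (fun y => F y + G y) x.
Proof.
move=> [C1 [d1 [HC1 [Hd1 K1]]]] [C2 [d2 [HC2 [Hd2 K2]]]].
exists (C1 + C2), (Rmin d1 d2); repeat split; [lra | exact: Rmin_pos |].
move=> y Hy; have := Rmin_l d1 d2; have := Rmin_r d1 d2 => H2 H1.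
have := K1 y ltac:(lra); have := K2 y ltac:(lra); have := Rabs_triang (F y) (G y).
lra.
Qed.

Lemma lip_sq F x : lipat F x -> smallat (fun y => F y ^ 2) x.
Proof.
move=> [C [d [HC [Hd K]]]] eps Heps.
have HCC : 0 < C * C + 1 by nra.
exists (Rmin d (eps / (C * C + 1))); split.
  by apply: Rmin_pos => //; apply: Rdiv_lt_0_compat.
move=> y Hy; have := Rmin_l d (eps / (C * C + 1)); have := Rmin_r d (eps / (C * C + 1)).
move=> H2 H1; have {}K := K y ltac:(lra).
have := vnorm_ge0 (vsub y x); set v := vnorm (vsub y x) in K Hy * => Hv.
rewrite -RPow_abs; have := Rabs_pos (F y) => HF.
have : Rabs (F y) ^ 2 <= (C * v) ^ 2 by nra.
have Ediv : eps / (C * C + 1) * (C * C + 1) = eps by field; lra.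
have : v * (C * C + 1) <= eps by nra.
nra.
Qed.

Lemma small_dot_zero (g : vec k) x :
  smallat (fun y => dot g (vsub y x)) x -> forall i, g i = 0.
Proof.
move=> Hg i; apply: NNPP => Hgi; have Hp := Rabs_pos_lt _ Hgi.
have [d [Hd K]] := Hg (Rabs (g i) / 2) ltac:(lra).
pose e : vec k := fun j => if j == i then d / 2 else 0.
have Hdot : dot g e = g i * (d / 2).
  rewrite -(sumR_delta i (g i * (d / 2))); apply: sumR_ext => j.
  by rewrite /e; case: (eqVneq j i) => [->|_]; ring.
have Hnorm : vnorm e = d / 2.
  rewrite /vnorm /dot -(sqrt_Rsqr (d / 2)); last lra.
  congr sqrt; rewrite -(sumR_delta i (Rsqr (d / 2))); apply: sumR_ext => j.
  by rewrite /e /Rsqr; case: (eqVneq j i) => _; ring.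
have Ey : vsub (fun j => x j + e j) x = e.
  by apply: functional_extensionality => j; rewrite /vsub; ring.
have := K (fun j => x j + e j); rewrite Ey Hnorm Hdot Rabs_mult (Rabs_pos_eq (d / 2)); last lra.
move/(_ ltac:(lra)); nra.
Qed.

Lemma grad_unique F x g1 g2 :
  has_grad F x g1 -> has_grad F x g2 -> forall i, g1 i = g2 i.
Proof.
move=> H1 H2 i.
suff /small_dot_zero/(_ i) : smallat (fun y => dot (vsub g1 g2) (vsub y x)) x.
  by rewrite /vsub; lra.
apply: (small_ext (F := fun y => (-1) * (F y - F x - dot g1 (vsub y x))
                                + (F y - F x - dot g2 (vsub y x)))).
  by move=> y; rewrite dot_sub_l; ring.
by apply: small_add => //; apply: small_scal.
Qed.

Lemma has_grad_ext F G x g g' :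
  (forall y, F y = G y) -> (forall i, g i = g' i) -> has_grad F x g -> has_grad G x g'.
Proof.
move=> FG gg'.
have -> : G = F by apply: functional_extensionality => y; rewrite FG.
by have -> : g' = g by apply: functional_extensionality => i; rewrite gg'.
Qed.

Lemma has_grad_transfer F G x g :
  has_grad F x g -> smallat (fun y => G y - F y - (G x - F x)) x -> has_grad G x g.
Proof.
move=> HF HGF; apply: small_ext (small_add HF HGF) => y; ring.
Qed.

End LittleO.

Definition qsym n (Q : mat n) : mat n := fun i j => Q i j + Q j i.
Definition gq n (Q : mat n) (b x : vec n) : vec n := fun i => matvec (qsym Q) x i + b i.

Section Quadratics.
Variable n : nat.
Implicit Types (Q : mat n) (b d x y : vec n).

Lemma quad_id Q b x y :
  bilin Q y y + dot b y
  = bilin Q x x + dot b x + dot (gq Q b x) (vsub y x) + bilin Q (vsub y x) (vsub y x).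
Proof.
set d := vsub y x; have Hy i : y i = x i + d i by rewrite /d /vsub; ring.
have Ecross : bilin Q y y - bilin Q x x - bilin Q d d =
   sumR (fun i => sumR (fun j => Q j i * x j * d i))
   + sumR (fun i => sumR (fun j => d i * Q i j * x j)).
  rewrite /bilin -!sumR_sub (sumR_swap (fun i j => Q j i * x j * d i)) -sumR_add.
  apply: sumR_ext => i; rewrite -!sumR_sub -sumR_add.
  by apply: sumR_ext => j; rewrite !Hy; ring.
have Egrad : dot (gq Q b x) d =
   sumR (fun i => sumR (fun j => Q j i * x j * d i))
   + sumR (fun i => sumR (fun j => d i * Q i j * x j)) + dot b d.
  rewrite /dot /gq -!sumR_add; apply: sumR_ext => i.
  rewrite Rmult_plus_distr_r /matvec -sumR_scalr -sumR_add; congr (_ + _).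
  by apply: sumR_ext => j; rewrite /qsym; ring.
have Elin : dot b y = dot b x + dot b d.
  by rewrite /dot -sumR_add; apply: sumR_ext => i; rewrite Hy; ring.
lra.
Qed.

Lemma bilin_qsym Q d : 2 * bilin Q d d = bilin (qsym Q) d d.
Proof.
have Etr : bilin Q d d = bilin (fun i j => Q j i) d d.
  by rewrite /bilin sumR_swap; apply: sumR_ext => i; apply: sumR_ext => j; ring.
transitivity (bilin Q d d + bilin (fun i j => Q j i) d d); first by rewrite -Etr; ring.
rewrite /bilin -sumR_add; apply: sumR_ext => i; rewrite -sumR_add.
by apply: sumR_ext => j; rewrite /qsym; ring.
Qed.

Lemma bilin_small Q x : smallat (fun y => bilin Q (vsub y x) (vsub y x)) x.
Proof.
have [bq [Hbq HQ]] := mat_bound Q; have Hn := nR_ge0 n.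
set K := bq * nR n * nR n + 1; have HK : 0 < K by rewrite /K; nra.
move=> eps Heps; exists (eps / K); split=> [|y Hy]; first exact: Rdiv_lt_0_compat.
have := bilin_bound (vsub y x) (vsub y x) HQ; have := N1_le_vnorm (vsub y x).
have := N1_ge0 (vsub y x); have := vnorm_ge0 (vsub y x).
set v := vnorm (vsub y x) in Hy *; set N := N1 (vsub y x) => Hv HN HNv HB.
have Ediv : eps / K * K = eps by field; lra.
have HvK : v * K <= eps by nra.
have : bq * N * N <= bq * (nR n * v) * (nR n * v).
  by apply: Rmult_le_compat; try nra; apply: Rmult_le_compat_l; lra.
rewrite /K in HvK; nra.
Qed.

Lemma quad_grad Q b (k : R) x : has_grad (fun y => bilin Q y y + dot b y + k) x (gq Q b x).
Proof.
apply: small_ext (bilin_small Q x) => y; have := quad_id Q b x y; lra.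
Qed.

Lemma quad_increment Q b x y bq : 0 <= bq -> (forall i j, Rabs (Q i j) <= bq) ->
  vnorm (vsub y x) <= 1 ->
  Rabs (bilin Q y y + dot b y - (bilin Q x x + dot b x))
  <= (N1 (gq Q b x) + bq * nR n) * nR n * vnorm (vsub y x).
Proof.
move=> Hbq HQ Hy1; rewrite (quad_id Q b x y).
have Hd := dot_bound (gq Q b x) (vsub y x).
have HB := bilin_bound (vsub y x) (vsub y x) HQ.
have HNv := N1_le_vnorm (vsub y x); have HN := N1_ge0 (vsub y x).
have Hg := N1_ge0 (gq Q b x); have Hv := vnorm_ge0 (vsub y x); have Hn := nR_ge0 n.
set v := vnorm (vsub y x) in Hy1 HNv Hv *; set N := N1 (vsub y x) in Hd HB HNv HN.
set Ng := N1 (gq Q b x) in Hd Hg *.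
have H1 : Ng * N <= Ng * (nR n * v) by apply: Rmult_le_compat_l.
have H2 : bq * N * N <= bq * (nR n * v) * (nR n * v).
  by apply: Rmult_le_compat; try nra; apply: Rmult_le_compat_l.
have H3 : bq * (nR n * v) * (nR n * v) <= bq * nR n * nR n * v.
  have -> : bq * (nR n * v) * (nR n * v) = bq * nR n * nR n * (v * v) by ring.
  by apply: Rmult_le_compat_l; nra.
have := Rabs_triang (dot (gq Q b x) (vsub y x)) (bilin Q (vsub y x) (vsub y x)).
have -> : bilin Q x x + dot b x + dot (gq Q b x) (vsub y x) + bilin Q (vsub y x) (vsub y x)
          - (bilin Q x x + dot b x)
          = dot (gq Q b x) (vsub y x) + bilin Q (vsub y x) (vsub y x) by ring.
nra.
Qed.

End Quadratics.

Definition qmix n k (L : qmap n k) (s : vec k) : mat n :=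
  fun i i' => dot s (fun j => qQ L j i i').
Definition bmix n k (L : qmap n k) (s : vec k) : vec n :=
  fun i => dot s (fun j => qb L j i).
Definition cmix n k (L : qmap n k) (s : vec k) : R := dot s (qc L).

Section QuadraticMaps.
Variables (n k : nat) (L : qmap n k).

Lemma dot_qeval (x : vec n) (s : vec k) :
  dot (qeval L x) s = bilin (qmix L s) x x + dot (bmix L s) x + cmix L s.
Proof.
have Equad : bilin (qmix L s) x x = sumR (fun j => s j * bilin (qQ L j) x x).
  rewrite /bilin /qmix /dot.
  transitivity (sumR (fun i => sumR (fun i' => sumR (fun j => s j * (x i * qQ L j i i' * x i'))))).
    apply: sumR_ext => i; apply: sumR_ext => i'.
    by rewrite -sumR_scal -sumR_scalr; apply: sumR_ext => j; ring.
  transitivity (sumR (fun i => sumR (fun j => sumR (fun i' => s j * (x i * qQ L j i i' * x i'))))).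
    by apply: sumR_ext => i; apply: sumR_swap.
  rewrite sumR_swap; apply: sumR_ext => j; rewrite -sumR_scal; apply: sumR_ext => i.
  by rewrite -sumR_scal.
have Elin : dot (bmix L s) x = sumR (fun j => s j * dot (qb L j) x).
  rewrite /dot /bmix /dot.
  transitivity (sumR (fun i => sumR (fun j => s j * (qb L j i * x i)))).
    by apply: sumR_ext => i; rewrite -sumR_scalr; apply: sumR_ext => j; ring.
  by rewrite sumR_swap; apply: sumR_ext => j; rewrite -sumR_scal.
rewrite Equad Elin /cmix [dot (qeval L x) s]/dot [dot s (qc L)]/dot /qeval -!sumR_add.
by apply: sumR_ext => j; ring.
Qed.

Lemma qhess_qsym (s : vec k) i i' : qhess L s i i' = qsym (qmix L s) i i'.
Proof. by rewrite /qhess /qsym /qmix /dot -sumR_add; apply: sumR_ext => j; ring. Qed.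

Lemma qsym_qmix_sub (s s' : vec k) i i' :
  qsym (qmix L (vsub s' s)) i i' = qsym (qmix L s') i i' - qsym (qmix L s) i i'.
Proof. by rewrite /qsym /qmix !dot_sub_l; ring. Qed.

Lemma bmix_sub (s s' : vec k) i : bmix L (vsub s' s) i = bmix L s' i - bmix L s i.
Proof. exact: dot_sub_l. Qed.

Lemma qsym_qmix_bound :
  exists bq, 0 <= bq /\ forall s i i', Rabs (qsym (qmix L s) i i') <= bq * N1 s.
Proof.
have [bq [Hbq HQ]] := fin_bound (fun p : 'I_k * 'I_n * 'I_n => qQ L p.1.1 p.1.2 p.2).
exists (2 * bq); split=> [|s i i']; first lra.
have H1 := dot_bound_sup (v := fun j => qQ L j i i') s (fun j => HQ (j, i, i')).
have H2 := dot_bound_sup (v := fun j => qQ L j i' i) s (fun j => HQ (j, i', i)).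
by have := Rabs_triang (qmix L s i i') (qmix L s i' i); rewrite /qsym /qmix; lra.
Qed.

Lemma bmix_bound : exists bb, 0 <= bb /\ forall s i, Rabs (bmix L s i) <= bb * N1 s.
Proof.
have [bb [Hbb Hb]] := fin_bound (fun p : 'I_k * 'I_n => qb L p.1 p.2).
by exists bb; split=> // s i; apply: dot_bound_sup => j; apply: (Hb (j, i)).
Qed.

End QuadraticMaps.

Definition lipvec n k (L : vec n -> vec k) (x0 : vec n) : Prop :=
  exists C delta, 0 <= C /\ 0 < delta /\ forall y, vnorm (vsub y x0) < delta ->
    vnorm (vsub (L y) (L x0)) <= C * vnorm (vsub y x0).

Lemma qeval_lip n k (L : qmap n k) (x0 : vec n) : lipvec (qeval L) x0.
Proof.
have [bq [Hbq HQ]] := fin_bound (fun p : 'I_k * 'I_n * 'I_n => qQ L p.1.1 p.1.2 p.2).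
pose C j := (N1 (gq (qQ L j) (qb L j) x0) + bq * nR n) * nR n.
have HC j : 0 <= C j.
  by have := N1_ge0 (gq (qQ L j) (qb L j) x0); have := nR_ge0 n; rewrite /C; nra.
exists (sumR C), 1; repeat split; [exact: sumR_ge0 | lra |] => y Hy.
apply: Rle_trans (vnorm_le_N1 _) _; rewrite /N1 -sumR_scalr; apply: sumR_le => j.
have -> : vsub (qeval L y) (qeval L x0) j
          = bilin (qQ L j) y y + dot (qb L j) y - (bilin (qQ L j) x0 x0 + dot (qb L j) x0).
  by rewrite /vsub /qeval; ring.
by apply: quad_increment => [//|i i'|]; [apply: (HQ (j, i, i')) | lra].
Qed.

Definition breg k (V : vec k -> R) (xi g eta : vec k) : R :=
  V eta - V xi - dot g (vsub eta xi).

Lemma breg_comp_small n k (V : vec k -> R) (L : vec n -> vec k) x0 g :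
  has_grad V (L x0) g -> lipvec L x0 -> smallat (fun y => breg V (L x0) g (L y)) x0.
Proof.
move=> HV [C [d [HC [Hd HL]]]] eps Heps.
have He : 0 < eps / (C + 1) by apply: Rdiv_lt_0_compat; lra.
have [dV [HdV KV]] := HV _ He.
have HdC : 0 < dV / (C + 1) by apply: Rdiv_lt_0_compat; lra.
exists (Rmin d (dV / (C + 1))); split=> [|y Hy]; first exact: Rmin_pos.
have Hy1 := Rmin_l d (dV / (C + 1)); have Hy2 := Rmin_r d (dV / (C + 1)).
have {}HL := HL y ltac:(lra); have Hv := vnorm_ge0 (vsub y x0).
have HvL := vnorm_ge0 (vsub (L y) (L x0)).
have EdV : dV / (C + 1) * (C + 1) = dV by field; lra.
have Eeps : eps / (C + 1) * (C + 1) = eps by field; lra.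
have HLt : vnorm (vsub (L y) (L x0)) < dV by nra.
apply: Rle_trans (KV _ HLt) _.
have : eps / (C + 1) * vnorm (vsub (L y) (L x0)) <= eps / (C + 1) * ((C + 1) * vnorm (vsub y x0)).
  by apply: Rmult_le_compat_l; lra.
by rewrite -Rmult_assoc Eeps.
Qed.

Lemma lipvec_dot n k (L : vec n -> vec k) (g : vec k) x0 :
  lipvec L x0 -> lipat (fun y => dot g (vsub (L y) (L x0))) x0.
Proof.
move=> [C [d [HC [Hd HL]]]]; have Hg := N1_ge0 g; have Hk := nR_ge0 k.
exists (N1 g * nR k * C), d; repeat split; [by apply: Rmult_le_pos; nra | lra |] => y Hy.
apply: Rle_trans (dot_bound _ _) _; rewrite !Rmult_assoc; apply: Rmult_le_compat_l => //.
apply: Rle_trans (N1_le_vnorm _) _; apply: Rmult_le_compat_l => //.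
exact: HL.
Qed.

Lemma le_of_forall_eps (a b c : R) : 0 <= c -> (forall eps, 0 < eps -> a - eps * c <= b) -> a <= b.
Proof.
move=> Hc H; apply: Rnot_lt_le => Hba.
have Hpos : 0 < (a - b) / (c + 1) by apply: Rdiv_lt_0_compat; lra.
have := H _ Hpos; have : (a - b) / (c + 1) * (c + 1) = a - b by field; lra.
nra.
Qed.

Lemma breg_convex_ge0 k (E : vec k -> Prop) V (xi eta g : vec k) :
  convex_on E V -> E xi -> E eta -> has_grad V xi g -> 0 <= breg V xi g eta.
Proof.
move=> [_ Hconv] Hxi Heta Hg; rewrite /breg.
set D := vsub eta xi; have HnD := vnorm_ge0 D.
suff : dot g D <= V eta - V xi by lra.
apply: (le_of_forall_eps HnD) => eps Heps.
have [d [Hd K]] := Hg eps Heps.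
set t := Rmin 1 (d / (vnorm D + 1)).
have Ht0 : 0 < t by apply: Rmin_pos; [lra | apply: Rdiv_lt_0_compat; lra].
have Ht1 : t <= 1 by apply: Rmin_l.
have Ed : d / (vnorm D + 1) * (vnorm D + 1) = d by field; lra.
have Hq : 0 < d / (vnorm D + 1) by apply: Rdiv_lt_0_compat; lra.
have Htq : t <= d / (vnorm D + 1) by apply: Rmin_r.
have Htd : t * vnorm D < d by nra.
have Ez : vsub (vcomb t eta xi) xi = (fun i => t * D i).
  by apply: functional_extensionality => i; rewrite /vsub /vcomb /D /vsub; ring.
have Edot : dot g (fun i => t * D i) = t * dot g D.
  by rewrite /dot -sumR_scal; apply: sumR_ext => i; ring.
have := K (vcomb t eta xi); rewrite Ez vnorm_scal Rabs_pos_eq ?Edot; last lra.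
move=> /(_ Htd) /(Rle_trans _ _ _ (Req_le _ _ (Rabs_Ropp _))) /(Rle_trans _ _ _ (Rle_abs _)) Hlow.
have Hjensen := Hconv eta xi t Heta Hxi ltac:(lra).
have : t * (dot g D - eps * vnorm D) <= t * (V eta - V xi) by nra.
by move/(Rmult_le_reg_l _ _ _ Ht0).
Qed.

(* Nonsingular matrices.  [mxT M] represents M acting on row vectors, so that
   MathComp's determinant theory applies: a matrix with trivial kernel is
   invertible, hence M x = b is solvable and M has a left inverse. *)
Definition mxT n (M : mat n) : 'M[R]_n := \matrix_(i, j) M j i.

Lemma matvec_mxT n (M : mat n) (v : 'rV[R]_n) i :
  matvec M (fun j => v ord0 j) i = (v *m mxT M)%R ord0 i.
Proof.
rewrite mxE; apply: eq_bigr => j _; rewrite mxE.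
exact: Rmult_comm.
Qed.

Lemma nonsingular_unitmx n (M : mat n) : nonsingular M -> mxT M \in unitmx.
Proof.
move=> HM; rewrite unitmxE GRing.unitfE.
apply/negP => /det0P [v /negP Hv0 HvM]; apply: Hv0.
apply/eqP/matrixP => i j; rewrite (ord1 i) mxE.
by apply: (HM (fun j => v ord0 j)) => k; rewrite matvec_mxT HvM mxE.
Qed.

Lemma nonsingular_solve n (M : mat n) : nonsingular M ->
  forall b : vec n, exists x : vec n, forall i, matvec M x i = b i.
Proof.
move=> /nonsingular_unitmx HU b.
exists (fun j => ((\row_k b k) *m invmx (mxT M))%R ord0 j) => i.
by rewrite matvec_mxT -mulmxA mulVmx // mulmx1 mxE.
Qed.

Lemma nonsingular_left_inv n (M : mat n) : nonsingular M ->
  exists N : mat n, forall d i, matvec N (matvec M d) i = d i.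
Proof.
move=> /nonsingular_unitmx HU; exists (fun i j => invmx (mxT M) j i) => d i.
have Hw j : matvec M d j = ((\row_k d k) *m mxT M)%R ord0 j.
  by rewrite -matvec_mxT; apply: sumR_ext => k; rewrite mxE.
transitivity ((((\row_k d k) *m mxT M) *m invmx (mxT M))%R ord0 i).
  rewrite [RHS]mxE; apply: eq_bigr => j _; rewrite -Hw.
  exact: Rmult_comm.
by rewrite -mulmxA mulmxV // mulmx1 mxE.
Qed.

(* Coercivity |d| <= K |M d| (in the l1 norm) quantifies nonsingularity; it
   survives small perturbations of M, which is what makes the stationary
   point of a quadratic depend Lipschitz-continuously on its data. *)
Definition coercive n (M : mat n) (K : R) : Prop := forall d, N1 d <= K * N1 (matvec M d).

Lemma nonsingular_coercive n (M : mat n) : nonsingular M -> exists K, 0 <= K /\ coercive M K.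
Proof.
move=> /nonsingular_left_inv [N HN]; have [bN [HbN HNb]] := mat_bound N.
exists (nR n * bN); split; first by have := nR_ge0 n; nra.
move=> d; have -> : N1 d = N1 (matvec N (matvec M d)).
  by apply: sumR_ext => i; rewrite HN.
exact: matvec_N1.
Qed.

Lemma coercive_nonsingular n (M : mat n) K : coercive M K -> nonsingular M.
Proof.
move=> HM d Hd; apply: N1_le0_eq0; have := HM d.
have -> : N1 (matvec M d) = 0.
  by rewrite /N1 -[RHS](sumR_0 n); apply: sumR_ext => i; rewrite Hd Rabs_R0.
lra.
Qed.

Lemma coercive_perturb n (G0 G1 : mat n) K e : 0 <= K -> coercive G0 K ->
  (forall i j, Rabs (G1 i j - G0 i j) <= e) -> K * (nR n * e) <= / 2 ->
  coercive G1 (2 * K).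
Proof.
move=> HK HG0 HE Hsmall d; set E : mat n := fun i j => G1 i j - G0 i j.
have Htri : N1 (matvec G0 d) <= N1 (matvec G1 d) + N1 (matvec E d).
  rewrite /N1 -sumR_add; apply: sumR_le => i.
  have HEi : matvec E d i = matvec G1 d i - matvec G0 d i.
    by rewrite /matvec -sumR_sub; apply: sumR_ext => j; rewrite /E; ring.
  have -> : matvec G0 d i = matvec G1 d i + - matvec E d i by rewrite HEi; ring.
  by rewrite -(Rabs_Ropp (matvec E d i)); apply: Rabs_triang.
have HEd : N1 (matvec E d) <= (nR n * e) * N1 d by apply: matvec_N1.
have := HG0 d; have := N1_ge0 d; have := N1_ge0 (matvec E d); have := N1_ge0 (matvec G1 d).
have : K * N1 (matvec E d) <= K * ((nR n * e) * N1 d) by apply: Rmult_le_compat_l.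
have : K * N1 (matvec G0 d) <= K * (N1 (matvec G1 d) + N1 (matvec E d)).
  by apply: Rmult_le_compat_l.
nra.
Qed.

Definition qval n (Q : mat n) (b : vec n) (k : R) (x : vec n) : R :=
  bilin Q x x + dot b x + k.

Lemma qval_at_stationary n (Q : mat n) b k x1 y :
  (forall i, gq Q b x1 i = 0) ->
  qval Q b k y = qval Q b k x1 + bilin Q (vsub y x1) (vsub y x1).
Proof.
move=> Hx1; rewrite /qval (quad_id Q b x1 y).
have -> : dot (gq Q b x1) (vsub y x1) = 0.
  by rewrite -(dot_zero_l (vsub y x1)); apply: sumR_ext => i; rewrite Hx1.
ring.
Qed.

Section ParametricQuadratic.
Variables (P : Type) (n : nat) (Q : P -> mat n) (b : P -> vec n) (k : P -> R).
Variables (p0 : P) (dist : P -> R) (x0 : vec n) (K0 Cg Cb : R).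
Hypothesis dist_ge0 : forall p, 0 <= dist p.
Hypothesis stationary0 : forall i, gq (Q p0) (b p0) x0 i = 0.
Hypothesis K0_ge0 : 0 <= K0.
Hypothesis coercive0 : coercive (qsym (Q p0)) K0.
Hypothesis Cg_ge0 : 0 <= Cg.
Hypothesis Cb_ge0 : 0 <= Cb.
Hypothesis G_lip : forall p, dist p <= 1 ->
  forall i j, Rabs (qsym (Q p) i j - qsym (Q p0) i j) <= Cg * dist p.
Hypothesis b_lip : forall p, dist p <= 1 -> forall i, Rabs (b p i - b p0 i) <= Cb * dist p.
Hypothesis value_small : forall e, 0 < e -> exists d, 0 < d /\ forall p, dist p < d ->
  Rabs (qval (Q p) (b p) (k p) x0 - qval (Q p0) (b p0) (k p0) x0) <= e * dist p.

Lemma residual_bound p : dist p <= 1 ->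
  N1 (gq (Q p) (b p) x0) <= nR n * (Cg * N1 x0 + Cb) * dist p.
Proof.
move=> Hp; rewrite Rmult_assoc; apply: N1_const_bound => i.
have -> : gq (Q p) (b p) x0 i
          = dot x0 (fun j => qsym (Q p) i j - qsym (Q p0) i j) + (b p i - b p0 i).
  have := stationary0 i; rewrite /gq /matvec /dot => H0.
  have : sumR (fun j => x0 j * (qsym (Q p) i j - qsym (Q p0) i j))
         = sumR (fun j => qsym (Q p) i j * x0 j) - sumR (fun j => qsym (Q p0) i j * x0 j).
    by rewrite -sumR_sub; apply: sumR_ext => j; ring.
  lra.
apply: Rle_trans (Rabs_triang _ _) _.
have := dot_bound_sup x0 (G_lip Hp i); have := b_lip Hp i.
lra.
Qed.

(* Close to p0 the perturbed Hessian is still coercive, so a stationary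
   point x1 of the perturbed quadratic is within O(dist p) of x0, and its
   value within O(dist p ^ 2) of the perturbed value at x0. *)
Lemma stationary_value_gap : exists W, 0 <= W /\ forall p x1,
  dist p <= 1 -> K0 * (nR n * (Cg * dist p)) <= / 2 ->
  (forall i, gq (Q p) (b p) x1 i = 0) ->
  Rabs (qval (Q p) (b p) (k p) x1 - qval (Q p) (b p) (k p) x0) <= W * dist p ^ 2.
Proof.
have [bG [HbG HG0]] := mat_bound (qsym (Q p0)).
have Hn := nR_ge0 n; have HNx := N1_ge0 x0.
set C1 := nR n * (Cg * N1 x0 + Cb); have HC1 : 0 <= C1.
  by apply: Rmult_le_pos => //; apply: Rplus_le_le_0_compat => //; apply: Rmult_le_pos.
exists (/ 2 * (bG + Cg) * (2 * K0 * C1) ^ 2); split.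
  by have := pow2_ge_0 (2 * K0 * C1); nra.
move=> p x1 Hp1 Hsmall Hx1.
have Hcoer := coercive_perturb K0_ge0 coercive0 (G_lip Hp1) Hsmall.
set Delta := vsub x0 x1.
have HGDelta : N1 (matvec (qsym (Q p)) Delta) = N1 (gq (Q p) (b p) x0).
  apply: sumR_ext => i; rewrite matvec_sub; congr Rabs.
  by have := Hx1 i; rewrite /gq; lra.
have HDelta : N1 Delta <= 2 * K0 * (C1 * dist p).
  apply: Rle_trans (Hcoer Delta) _; rewrite HGDelta.
  by apply: Rmult_le_compat_l; [lra | apply: residual_bound].
have Hentries i j : Rabs (qsym (Q p) i j) <= bG + Cg.
  have := G_lip Hp1 i j; have := HG0 i j; have := dist_ge0 p.
  have := Rabs_triang (qsym (Q p) i j - qsym (Q p0) i j) (qsym (Q p0) i j).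
  have -> : qsym (Q p) i j - qsym (Q p0) i j + qsym (Q p0) i j = qsym (Q p) i j by ring.
  nra.
rewrite (qval_at_stationary (k p) x0 Hx1) -/Delta.
have -> : qval (Q p) (b p) (k p) x1 - (qval (Q p) (b p) (k p) x1 + bilin (Q p) Delta Delta)
          = - (/ 2 * bilin (qsym (Q p)) Delta Delta) by rewrite -bilin_qsym; field.
rewrite Rabs_Ropp Rabs_mult Rabs_pos_eq; last lra.
have HB := bilin_bound Delta Delta Hentries; have HN := N1_ge0 Delta.
have Hsq : N1 Delta * N1 Delta <= (2 * K0 * (C1 * dist p)) * (2 * K0 * (C1 * dist p)).
  by apply: Rmult_le_compat.
have HbGC : 0 <= bG + Cg by lra.
have : (bG + Cg) * N1 Delta * N1 Delta <= (bG + Cg) * (2 * K0 * C1) ^ 2 * dist p ^ 2.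
  by rewrite Rmult_assoc; apply: Rle_trans (Rmult_le_compat_l _ _ _ HbGC Hsq) _; right; ring.
nra.
Qed.

Lemma stationary_value_small : forall e, 0 < e -> exists d, 0 < d /\ forall p, dist p < d ->
  nonsingular (qsym (Q p)) /\
  forall x1, (forall i, gq (Q p) (b p) x1 i = 0) ->
    Rabs (qval (Q p) (b p) (k p) x1 - qval (Q p0) (b p0) (k p0) x0) <= e * dist p.
Proof.
move=> e He; have [W [HW Hgap]] := stationary_value_gap.
have [d1 [Hd1 Hval]] := @value_small (e / 2) ltac:(lra).
have HKC : 0 <= K0 * (nR n * Cg).
  by apply: Rmult_le_pos => //; apply: Rmult_le_pos => //; apply: nR_ge0.
set dp := / (2 * (K0 * (nR n * Cg) + 1)); have Hdp : 0 < dp by apply: Rinv_0_lt_compat; lra.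
set dq := e / (2 * (W + 1)); have Hdq : 0 < dq by apply: Rdiv_lt_0_compat; lra.
exists (Rmin (Rmin 1 d1) (Rmin dp dq)); split=> [|p /lt_Rmin4 [Hp1 [Hpd1 [Hpdp Hpdq]]]].
  by apply: Rmin_pos; apply: Rmin_pos; lra.
have HD := dist_ge0 p; have Hvp := Hval p Hpd1; have Hgp := Hgap p; have Hcp := G_lip (p := p).
set D := dist p in Hp1 Hpdp Hpdq HD Hvp Hgp Hcp *.
have HD1 : D <= 1 by lra.
have Hsmall : K0 * (nR n * (Cg * D)) <= / 2.
  have Edp : dp * (2 * (K0 * (nR n * Cg) + 1)) = 1 by rewrite /dp; field; lra.
  have -> : K0 * (nR n * (Cg * D)) = K0 * (nR n * Cg) * D by ring.
  nra.
split; first exact: coercive_nonsingular (coercive_perturb K0_ge0 coercive0 (Hcp HD1) Hsmall).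
move=> x1 /(Hgp x1 HD1 Hsmall) Hx1.
have HWD : W * D <= e / 2.
  have Edq : dq * (2 * (W + 1)) = e by rewrite /dq; field; lra.
  nra.
have HWD2 : W * D ^ 2 <= e / 2 * D by nra.
set v1 := qval (Q p) (b p) (k p) x1 in Hx1 *; set v0 := qval (Q p) (b p) (k p) x0 in Hx1 Hvp *.
set w0 := qval (Q p0) (b p0) (k p0) x0 in Hvp *.
have := Rabs_triang (v1 - v0) (v0 - w0); have -> : v1 - v0 + (v0 - w0) = v1 - w0 by ring.
lra.
Qed.

End ParametricQuadratic.

Section DualDistance.
Variables (kf l : nat) (t t' : R) (sf sf' : vec kf) (sh sh' : vec l).

Lemma dist3_ge0 : 0 <= dist3 t t' sf sf' sh sh'.
Proof. exact: sqrt_pos. Qed.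

Lemma dist3_t : Rabs (t' - t) <= dist3 t t' sf sf' sh sh'.
Proof.
rewrite /dist3 -sqrt_Rsqr_abs; apply: sqrt_le_1_alt; rewrite /Rsqr.
have := dot_ge0 (vsub sf' sf); have := dot_ge0 (vsub sh' sh); lra.
Qed.

Lemma dist3_vsf : vnorm (vsub sf' sf) <= dist3 t t' sf sf' sh sh'.
Proof.
apply: sqrt_le_1_alt; have := dot_ge0 (vsub sh' sh); have := pow2_ge_0 (t' - t); lra.
Qed.

Lemma dist3_vsh : vnorm (vsub sh' sh) <= dist3 t t' sf sf' sh sh'.
Proof.
apply: sqrt_le_1_alt; have := dot_ge0 (vsub sf' sf); have := pow2_ge_0 (t' - t); lra.
Qed.

Lemma dist3_sf : N1 (vsub sf' sf) <= nR kf * dist3 t t' sf sf' sh sh'.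
Proof.
apply: Rle_trans (N1_le_vnorm _) _; apply: Rmult_le_compat_l; [exact: nR_ge0 | exact: dist3_vsf].
Qed.

Lemma dist3_sh : N1 (vsub sh' sh) <= nR l * dist3 t t' sf sf' sh sh'.
Proof.
apply: Rle_trans (N1_le_vnorm _) _; apply: Rmult_le_compat_l; [exact: nR_ge0 | exact: dist3_vsh].
Qed.

Lemma dist3_shift m : dist3 t t' sf sf' sh sh' <= 1 -> Rabs (m + t') <= Rabs (m + t) + 1.
Proof.
move=> HD1; have := dist3_t; have -> : m + t' = (m + t) + (t' - t) by ring.
by have := Rabs_triang (m + t) (t' - t); lra.
Qed.

Lemma affine_param_lip (alpha : vec kf -> R) (beta : vec l -> R) a bb m :
  0 <= a -> 0 <= bb ->
  (forall s s', alpha (vsub s' s) = alpha s' - alpha s) -> (forall s, Rabs (alpha s) <= a * N1 s) ->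
  (forall s s', beta (vsub s' s) = beta s' - beta s) -> (forall s, Rabs (beta s) <= bb * N1 s) ->
  dist3 t t' sf sf' sh sh' <= 1 ->
  Rabs (alpha sf' + (m + t') * beta sh' - (alpha sf + (m + t) * beta sh))
  <= (a * nR kf + (Rabs (m + t) + 1) * (bb * nR l) + bb * N1 sh) * dist3 t t' sf sf' sh sh'.
Proof.
move=> Ha Hb alin abnd blin bbnd HD1.
have HD := dist3_ge0; have Ht := dist3_t; have Hf := dist3_sf; have Hh := dist3_sh.
set D := dist3 t t' sf sf' sh sh' in HD HD1 Ht Hf Hh *.
have -> : alpha sf' + (m + t') * beta sh' - (alpha sf + (m + t) * beta sh)
          = alpha (vsub sf' sf) + (m + t') * beta (vsub sh' sh) + (t' - t) * beta sh.
  by rewrite alin blin; ring.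
have H1 : Rabs (alpha (vsub sf' sf)) <= a * nR kf * D.
  by apply: Rle_trans (abnd _) _; rewrite Rmult_assoc; apply: Rmult_le_compat_l.
have H2 : Rabs (beta (vsub sh' sh)) <= bb * nR l * D.
  by apply: Rle_trans (bbnd _) _; rewrite Rmult_assoc; apply: Rmult_le_compat_l.
have H3 := dist3_shift m HD1.
have H4 := bbnd sh.
have Hp1 : Rabs ((m + t') * beta (vsub sh' sh)) <= (Rabs (m + t) + 1) * (bb * nR l * D).
  by rewrite Rabs_mult; apply: Rmult_le_compat; try apply: Rabs_pos.
have Hp2 : Rabs ((t' - t) * beta sh) <= D * (bb * N1 sh).
  by rewrite Rabs_mult; apply: Rmult_le_compat; try apply: Rabs_pos.
have := Rabs_triang (alpha (vsub sf' sf) + (m + t') * beta (vsub sh' sh)) ((t' - t) * beta sh).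
have := Rabs_triang (alpha (vsub sf' sf)) ((m + t') * beta (vsub sh' sh)).
lra.
Qed.

End DualDistance.

Lemma Vstar_at k (V : vec k -> R) E Es gV gVinv xi :
  canonical_fun V E Es gV gVinv -> E xi -> Vstar V gVinv (gV xi) = dot (gV xi) xi - V xi.
Proof. by move=> C Hxi; rewrite /Vstar (cf_inv_l C Hxi). Qed.

Section Problem.
Variables (n kf l : nat) (A : mat n) (c : vec n)
  (Lf : qmap n kf) (Vf : vec kf -> R) (Ef Efs : vec kf -> Prop) (gVf gVfinv : vec kf -> vec kf)
  (Lh : qmap n l) (Vh : vec l -> R) (Eh Ehs : vec l -> Prop) (gVh gVhinv : vec l -> vec l)
  (nu mu : R) (xbar : vec n).
Hypothesis HA : msymmetric A.
Hypothesis Cf : canonical_fun Vf Ef Efs gVf gVfinv.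
Hypothesis Ch : canonical_fun Vh Eh Ehs gVh gVhinv.
Hypothesis HEf : forall x, Ef (qeval Lf x).
Hypothesis HEh : forall x, Eh (qeval Lh x).
Hypothesis Hnu : 0 < nu.

Let Xi := Xi1 A c Lf Vf gVfinv Lh Vh gVhinv nu mu.
Let L := Laug A c Lf Vf Lh Vh nu mu.
Let h := hcon Lh Vh.

Definition QX t sf sh : mat n :=
  fun i j => qmix Lf sf i j + (mu + t) * qmix Lh sh i j + / 2 * A i j.
Definition bX t sf sh : vec n := fun i => bmix Lf sf i + (mu + t) * bmix Lh sh i - c i.
Definition kX t sf sh : R :=
  cmix Lf sf - Vstar Vf gVfinv sf + (mu + t) * (cmix Lh sh - Vstar Vh gVhinv sh) - nu / 2 * t ^ 2.

Lemma Xi_qval x t sf sh : Xi x t sf sh = qval (QX t sf sh) (bX t sf sh) (kX t sf sh) x.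
Proof.
rewrite /Xi /Xi1 /qval !dot_qeval.
have -> : bilin (QX t sf sh) x x
          = bilin (qmix Lf sf) x x + (mu + t) * bilin (qmix Lh sh) x x + / 2 * bilin A x x.
  rewrite /bilin -!sumR_scal -!sumR_add; apply: sumR_ext => i.
  by rewrite -!sumR_scal -!sumR_add; apply: sumR_ext => j; rewrite /QX; ring.
have -> : dot (bX t sf sh) x = dot (bmix Lf sf) x + (mu + t) * dot (bmix Lh sh) x - dot c x.
  by rewrite /dot -sumR_scal -sumR_add -sumR_sub; apply: sumR_ext => i; rewrite /bX; ring.
rewrite /kX; ring.
Qed.

Lemma Gmat_qsym t sf sh : Gmat A Lf Lh mu t sf sh = qsym (QX t sf sh).
Proof.
apply: functional_extensionality => i; apply: functional_extensionality => j.
by rewrite /Gmat !qhess_qsym /qsym /QX (HA j i); field.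
Qed.

Lemma Xi_stationary_iff x t sf sh :
  x_stationary (fun y => Xi y t sf sh) x <-> forall i, gq (QX t sf sh) (bX t sf sh) x i = 0.
Proof.
have Hgrad : has_grad (fun y => Xi y t sf sh) x (gq (QX t sf sh) (bX t sf sh) x).
  by apply: has_grad_ext (quad_grad _ _ _ x) => [y|i] //; rewrite Xi_qval.
split=> [Hx i | Hx]; first by rewrite (grad_unique Hgrad Hx).
by apply: has_grad_ext Hgrad => // i; rewrite Hx.
Qed.

Lemma Pd_value t sf sh : (exists x, forall i, gq (QX t sf sh) (bX t sf sh) x i = 0) ->
  exists x, (forall i, gq (QX t sf sh) (bX t sf sh) x i = 0) /\
    Pd A c Lf Vf gVfinv Lh Vh gVhinv nu mu t sf sh = Xi x t sf sh.
Proof.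
move=> [x0 Hx0]; rewrite /Pd.
set S := fun x => x_stationary _ x.
have HS : exists x, S x by exists x0; apply/Xi_stationary_iff.
eexists; split; last reflexivity.
exact/Xi_stationary_iff/(epsilon_spec (inhabits (fun _ : 'I_n => 0)) S HS).
Qed.

Definition taub := h xbar / nu.
Definition sfb := gVf (qeval Lf xbar).
Definition shb := gVh (qeval Lh xbar).

Lemma Laug_gap y : L y - Xi y taub sfb shb
  = breg Vf (qeval Lf xbar) sfb (qeval Lf y)
    + (mu + taub) * breg Vh (qeval Lh xbar) shb (qeval Lh y)
    + / (2 * nu) * (h y - h xbar) ^ 2.
Proof.
rewrite /L /Xi /Laug /Xi1 /fobj /breg /taub /sfb /shb /h /hcon.
rewrite (Vstar_at Cf (HEf xbar)) (Vstar_at Ch (HEh xbar)) !dot_sub_r.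
rewrite (dot_comm (qeval Lf y)) (dot_comm (qeval Lh y)).
by field; lra.
Qed.

Lemma Laug_xbar : L xbar = Xi xbar taub sfb shb.
Proof.
have := Laug_gap xbar; rewrite /breg !dot_sub_r.
have -> : h xbar - h xbar = 0 by ring.
lra.
Qed.

(* Every term of the gap is o(|y - xbar|), so xbar, a stationary point of
   the augmented Lagrangian, is also a stationary point of Xi(., p0). *)
Lemma xbar_stationary : x_stationary L xbar ->
  forall i, gq (QX taub sfb shb) (bX taub sfb shb) xbar i = 0.
Proof.
move=> Hst; apply/Xi_stationary_iff/(has_grad_transfer Hst).
have Hf := breg_comp_small (cf_diff Cf (HEf xbar)) (qeval_lip Lf xbar).
have Hh := breg_comp_small (cf_diff Ch (HEh xbar)) (qeval_lip Lh xbar).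
have Hhlip : lipat (fun y => h y - h xbar) xbar.
  apply: lip_ext (lip_add (lipvec_dot shb (qeval_lip Lh xbar)) (small_lip Hh)) => y.
  by rewrite /= /h /hcon /breg /shb; ring.
have Hsq := lip_sq Hhlip.
apply: small_ext (small_scal (-1) (small_add (small_add Hf (small_scal (mu + taub) Hh))
                                             (small_scal (/ (2 * nu)) Hsq))) => y.
by move: (Laug_gap y); rewrite /= -Laug_xbar /sfb /shb; lra.
Qed.

(* With convex V_f, V_h and mu + tau > 0 the gap is nonnegative. *)
Lemma Xi_le_Laug y : convex_on Ef Vf -> convex_on Eh Vh -> 0 < mu + taub ->
  Xi y taub sfb shb <= L y.
Proof.
move=> Hcf Hch Hmt.
have Bf := breg_convex_ge0 Hcf (HEf xbar) (HEf y) (cf_diff Cf (HEf xbar)).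
have Bh := breg_convex_ge0 Hch (HEh xbar) (HEh y) (cf_diff Ch (HEh xbar)).
have Hsq : 0 <= / (2 * nu) * (h y - h xbar) ^ 2.
  by apply: Rmult_le_pos; [apply/Rlt_le/Rinv_0_lt_compat; lra | apply: pow2_ge_0].
have := Laug_gap y; rewrite /sfb /shb; nra.
Qed.

Lemma xbar_global_min : x_stationary L xbar ->
  convex_on Ef Vf -> convex_on Eh Vh -> 0 < mu + taub -> posdef (qsym (QX taub sfb shb)) ->
  forall y, L xbar <= L y.
Proof.
move=> Hst Hcf Hch Hmt Hpd y.
apply: Rle_trans (Xi_le_Laug y Hcf Hch Hmt); rewrite Laug_xbar !Xi_qval.
rewrite (qval_at_stationary _ y (xbar_stationary Hst)).
suff : 0 <= 2 * bilin (QX taub sfb shb) (vsub y xbar) (vsub y xbar) by lra.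
rewrite bilin_qsym; case: (classic (exists i, vsub y xbar i <> 0)) => [/Hpd | Hzero]; first lra.
have -> : vsub y xbar = (fun _ => 0).
  by apply: functional_extensionality => i; apply: NNPP => Hi; apply: Hzero; exists i.
suff -> : bilin (qsym (QX taub sfb shb)) (fun _ => 0) (fun _ => 0) = 0 by lra.
rewrite /bilin -[RHS](sumR_0 n); apply: sumR_ext => i.
by rewrite -[RHS](sumR_0 n); apply: sumR_ext => j; ring.
Qed.

(* With a nonsingular Hessian, xbar is the only stationary point of
   Xi(., p0), so P^d(p0) = Xi(xbar, p0). *)
Lemma Pd_at_p0 : x_stationary L xbar -> nonsingular (qsym (QX taub sfb shb)) ->
  Pd A c Lf Vf gVfinv Lh Vh gVhinv nu mu taub sfb shb = Xi xbar taub sfb shb.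
Proof.
move=> Hst HG; have Hxbar := xbar_stationary Hst.
have [x [Hx ->]] := Pd_value (ex_intro _ xbar Hxbar).
suff Hdiff : forall i, vsub x xbar i = 0.
  by congr Xi; apply: functional_extensionality => i; have := Hdiff i; rewrite /vsub; lra.
apply: HG => i; rewrite matvec_sub.
by have := Hx i; have := Hxbar i; rewrite /gq; lra.
Qed.

Lemma Xi_xbar_increment t sf sh :
  Xi xbar t sf sh - Xi xbar taub sfb shb
  = - breg (Vstar Vf gVfinv) sfb (gVfinv sfb) sf
    - (mu + t) * breg (Vstar Vh gVhinv) shb (gVhinv shb) sh - nu / 2 * (t - taub) ^ 2.
Proof.
rewrite /Xi /Xi1 /breg /sfb /shb (cf_inv_l Cf (HEf xbar)) (cf_inv_l Ch (HEh xbar)).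
rewrite (Vstar_at Cf (HEf xbar)) (Vstar_at Ch (HEh xbar)) !dot_sub_r.
rewrite (dot_comm (qeval Lf xbar) sf) (dot_comm (qeval Lh xbar) sh).
rewrite (dot_comm (qeval Lf xbar) (gVf _)) (dot_comm (qeval Lh xbar) (gVh _)).
by rewrite /taub /h /hcon; field; lra.
Qed.

(* Hence Xi(xbar, p) = Xi(xbar, p0) + o(dist(p, p0)), by differentiability
   of the conjugates. *)
Lemma Xi_xbar_small : forall e, 0 < e -> exists d, 0 < d /\ forall t sf sh,
  dist3 taub t sfb sf shb sh < d ->
  Rabs (Xi xbar t sf sh - Xi xbar taub sfb shb) <= e * dist3 taub t sfb sf shb sh.
Proof.
move=> e He; set m0 := Rabs (mu + taub) + 1.
have Hm0 : 0 < m0 by have := Rabs_pos (mu + taub); rewrite /m0; lra.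
set e1 := e / (2 * (m0 + 1)); have He1 : 0 < e1 by apply: Rdiv_lt_0_compat; lra.
have [df [Hdf Kf]] := cf_conj_diff Cf (cf_maps Cf (HEf xbar)) He1.
have [dh [Hdh Kh]] := cf_conj_diff Ch (cf_maps Ch (HEh xbar)) He1.
rewrite -/sfb in Kf; rewrite -/shb in Kh.
exists (Rmin (Rmin 1 (e / nu)) (Rmin df dh)).
split=> [|t sf sh /lt_Rmin4 [H1 [Hnu' [Hf' Hh']]]].
  by apply: Rmin_pos; apply: Rmin_pos; try apply: Rdiv_lt_0_compat; lra.
have HD := dist3_ge0 taub t sfb sf shb sh; have Ht := dist3_t taub t sfb sf shb sh.
have Hf := dist3_vsf taub t sfb sf shb sh; have Hh := dist3_vsh taub t sfb sf shb sh.
set D := dist3 taub t sfb sf shb sh in H1 Hnu' Hf' Hh' HD Ht Hf Hh *.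
have {}Kf := Kf sf ltac:(lra); have {}Kh := Kh sh ltac:(lra).
rewrite Xi_xbar_increment.
set Rf := breg _ _ _ sf in Kf *; set Rh := breg _ _ _ sh in Kh *.
have Af : Rabs Rf <= e1 * D by apply: Rle_trans Kf _; apply: Rmult_le_compat_l; lra.
have Ah : Rabs Rh <= e1 * D by apply: Rle_trans Kh _; apply: Rmult_le_compat_l; lra.
have Hmt : Rabs (mu + t) <= m0 := dist3_shift mu (Rlt_le _ _ H1).
have Amh : Rabs ((mu + t) * Rh) <= m0 * (e1 * D).
  by rewrite Rabs_mult; apply: Rmult_le_compat; try apply: Rabs_pos.
have Asq : nu / 2 * (t - taub) ^ 2 <= e / 2 * D.
  have Ed : e / nu * nu = e by field; lra.
  have HDe : nu * D <= e by nra.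
  have Hsq : (t - taub) ^ 2 <= D ^ 2.
    by rewrite -(pow2_abs (t - taub)); have := Rabs_pos (t - taub); nra.
  nra.
have Ee1 : e1 * (m0 + 1) = e / 2 by rewrite /e1; field; lra.
apply: Rle_trans (Rabs_neg3 _ _ _) _.
rewrite (Rabs_pos_eq (nu / 2 * (t - taub) ^ 2)); last by have := pow2_ge_0 (t - taub); nra.
nra.
Qed.

Lemma QX_lip : exists Cg, 0 <= Cg /\ forall t sf sh, dist3 taub t sfb sf shb sh <= 1 ->
  forall i j, Rabs (qsym (QX t sf sh) i j - qsym (QX taub sfb shb) i j)
              <= Cg * dist3 taub t sfb sf shb sh.
Proof.
have [bf [Hbf Bf]] := qsym_qmix_bound Lf; have [bh [Hbh Bh]] := qsym_qmix_bound Lh.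
have Hn := nR_ge0 kf; have Hl := nR_ge0 l; have HN := N1_ge0 shb; have Hm := Rabs_pos (mu + taub).
exists (bf * nR kf + (Rabs (mu + taub) + 1) * (bh * nR l) + bh * N1 shb); split.
  by apply: Rplus_le_le_0_compat; [apply: Rplus_le_le_0_compat|]; apply: Rmult_le_pos;
     try apply: Rmult_le_pos; lra.
move=> t sf sh HD i j.
have E t' sf' sh' : qsym (QX t' sf' sh') i j
  = qsym (qmix Lf sf') i j + (mu + t') * qsym (qmix Lh sh') i j + / 2 * (A i j + A j i).
  by rewrite /qsym /QX; ring.
rewrite !E; have -> : forall a b r : R, a + r - (b + r) = a - b by move=> *; ring.
apply: (affine_param_lip (alpha := fun s => qsym (qmix Lf s) i j)
                         (beta := fun s => qsym (qmix Lh s) i j)) => // s *;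
  by rewrite ?qsym_qmix_sub.
Qed.

Lemma bX_lip : exists Cb, 0 <= Cb /\ forall t sf sh, dist3 taub t sfb sf shb sh <= 1 ->
  forall i, Rabs (bX t sf sh i - bX taub sfb shb i) <= Cb * dist3 taub t sfb sf shb sh.
Proof.
have [bf [Hbf Bf]] := bmix_bound Lf; have [bh [Hbh Bh]] := bmix_bound Lh.
have Hn := nR_ge0 kf; have Hl := nR_ge0 l; have HN := N1_ge0 shb; have Hm := Rabs_pos (mu + taub).
exists (bf * nR kf + (Rabs (mu + taub) + 1) * (bh * nR l) + bh * N1 shb); split.
  by apply: Rplus_le_le_0_compat; [apply: Rplus_le_le_0_compat|]; apply: Rmult_le_pos;
     try apply: Rmult_le_pos; lra.
move=> t sf sh HD i; rewrite /bX.
have -> : forall a b r : R, a - r - (b - r) = a - b by move=> *; ring.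
apply: (affine_param_lip (alpha := fun s => bmix Lf s i)
                         (beta := fun s => bmix Lh s i)) => // s *;
  by rewrite ?bmix_sub.
Qed.

Lemma Pd_stationary : x_stationary L xbar -> nonsingular (qsym (QX taub sfb shb)) ->
  stationary3 (Pd A c Lf Vf gVfinv Lh Vh gVhinv nu mu) taub sfb shb.
Proof.
move=> Hst HG eps Heps.
have [K0 [HK0 Hcoer]] := nonsingular_coercive HG.
have [Cg [HCg HGlip]] := QX_lip; have [Cb [HCb Hblip]] := bX_lip.
pose dist p := dist3 taub p.1.1 sfb p.1.2 shb p.2.
have Hval : forall e, 0 < e -> exists d, 0 < d /\ forall p, dist p < d ->
    Rabs (qval (QX p.1.1 p.1.2 p.2) (bX p.1.1 p.1.2 p.2) (kX p.1.1 p.1.2 p.2) xbar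
          - qval (QX taub sfb shb) (bX taub sfb shb) (kX taub sfb shb) xbar) <= e * dist p.
  move=> e He; have [d [Hd Hx]] := Xi_xbar_small He.
  by exists d; split=> // [[[t sf] sh]] Hp; rewrite -!Xi_qval; apply: Hx.
have [d [Hd Hsmall]] := @stationary_value_small _ _ (fun p => QX p.1.1 p.1.2 p.2)
  (fun p => bX p.1.1 p.1.2 p.2) (fun p => kX p.1.1 p.1.2 p.2) (taub, sfb, shb) dist xbar
  K0 Cg Cb (fun p => dist3_ge0 _ _ _ _ _ _) (xbar_stationary Hst) HK0 Hcoer HCg HCb
  (fun p => HGlip p.1.1 p.1.2 p.2) (fun p => Hblip p.1.1 p.1.2 p.2) Hval eps Heps.
exists d; split=> // t sf sh Hp.
have [Hns Hval1] := Hsmall (t, sf, sh) Hp.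
have [x1 Hx1] :=
  nonsingular_solve (Hns : nonsingular (qsym (QX t sf sh))) (fun i => - bX t sf sh i).
have Hstat1 : forall i, gq (QX t sf sh) (bX t sf sh) x1 i = 0 by move=> i; rewrite /gq Hx1; ring.
have [x2 [Hx2 ->]] := Pd_value (ex_intro _ x1 Hstat1).
by rewrite (Pd_at_p0 Hst HG) !Xi_qval; apply: Hval1.
Qed.

End Problem.

Theorem corollary1 (n kf l : nat) (A : mat n) (c : vec n)
  (Lf : qmap n kf) (Vf : vec kf -> R) (Ef Efs : vec kf -> Prop)
  (gVf gVfinv : vec kf -> vec kf)
  (Lh : qmap n l) (Vh : vec l -> R) (Eh Ehs : vec l -> Prop)
  (gVh gVhinv : vec l -> vec l)
  (nu mu : R) (xbar : vec n) :
  msymmetric A ->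
  canonical_fun Vf Ef Efs gVf gVfinv ->
  canonical_fun Vh Eh Ehs gVh gVhinv ->
  (forall x, Ef (qeval Lf x)) ->
  (forall x, Eh (qeval Lh x)) ->
  0 < nu ->
  x_stationary (Laug A c Lf Vf Lh Vh nu mu) xbar ->
  let taub := hcon Lh Vh xbar / nu in
  let sfb := gVf (qeval Lf xbar) in
  let shb := gVh (qeval Lh xbar) in
  (nonsingular (Gmat A Lf Lh mu taub sfb shb) ->
     stationary3 (Pd A c Lf Vf gVfinv Lh Vh gVhinv nu mu) taub sfb shb /\
     Laug A c Lf Vf Lh Vh nu mu xbar
       = Pd A c Lf Vf gVfinv Lh Vh gVhinv nu mu taub sfb shb) /\
  (convex_on Ef Vf -> convex_on Eh Vh -> 0 < mu + taub ->
     posdef (Gmat A Lf Lh mu taub sfb shb) ->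
     forall y : vec n, Laug A c Lf Vf Lh Vh nu mu xbar <= Laug A c Lf Vf Lh Vh nu mu y).
Proof.
move=> HA Cf Ch HEf HEh Hnu Hst taub sfb shb; rewrite (Gmat_qsym Lf Lh mu HA).
split=> [HG | Hcf Hch Hmt Hpd].
  split; first exact: (Pd_stationary Cf Ch HEf HEh Hnu Hst HG).
  by rewrite (Laug_xbar A c mu xbar Cf Ch HEf HEh Hnu) (Pd_at_p0 Cf Ch HEf HEh Hnu Hst HG).
exact: (xbar_global_min Cf Ch HEf HEh Hnu Hst Hcf Hch Hmt Hpd).
Qed.
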